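(* Let $G$ be a very well-covered graph. Then for every local maximum stable set $S\in\Psi(G)$, the induced subgraph $G[N[S]]$ is a König–Egerváry graph.
   Context: All graphs are finite, simple, undirected. For $A\subseteq V(G)$, $N(A)=\{v\in V(G)-A: N(v)\cap A\neq\emptyset\}$ and $N[A]=A\cup N(A)$; $G[X]$ is the subgraph induced by $X$. A stable set is a set of pairwise non-adjacent vertices; $\alpha(G)$ is the maximum size of a stable set, and $\mu(G)$ the maximum size of a matching. $G$ is a König–Egerváry graph if $\alpha(G)+\mu(G)=|V(G)|$. $G$ is well-covered if all its maximal stable sets have the same cardinality, and very well-covered if it is well-covered, has no isolated vertices, and $|V(G)|=2\alpha(G)$. A set $A\subseteq V(G)$ is a local maximum stable set of $G$ if $A$ is a maximum stable set of $G[N[A]]$; $\Psi(G)$ denotes the family of all local maximum stable sets of $G$. *)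

(* A finite simple graph G is a type of vertices T : finType
   with a symmetric irreflexive adjacency relation e : rel T. Induced subgraphs
   G[X] are handled via vertex subsets X : {set T}. *)
From mathcomp Require Import all_boot all_order.
Set Implicit Arguments. Unset Strict Implicit. Unset Printing Implicit Defensive.

Section Graphs.
Variables (T : finType) (e : rel T).

Definition stable (S : {set T}) : bool :=
  [forall x in S, forall y in S, ~~ e x y].

Definition alpha_in (X : {set T}) : nat :=
  \max_(S : {set T} | (S \subset X) && stable S) #|S|.

Definition alpha : nat := alpha_in [set: T].

(* A matching of G[X]: a set of (oriented) edges, each with both ends in X,
   pairwise vertex-disjoint (so an edge cannot appear with both orientations). *)
Definition matching_in (X : {set T}) (M : {set T * T}) : bool :=
  [forall p in M, [&& e p.1 p.2, p.1 \in X & p.2 \in X]] &&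
  [forall p in M, forall q in M, (p != q) ==>
     [&& p.1 != q.1, p.1 != q.2, p.2 != q.1 & p.2 != q.2]].

Definition mu_in (X : {set T}) : nat :=
  \max_(M : {set T * T} | matching_in X M) #|M|.

Definition KE_in (X : {set T}) : Prop := alpha_in X + mu_in X = #|X|.

Definition closed_nbhd (A : {set T}) : {set T} :=
  A :|: [set v | [exists u in A, e v u]].

Definition well_covered : Prop :=
  forall S : {set T}, maxset stable S -> #|S| = alpha.

Definition very_well_covered : Prop :=
  [/\ well_covered, (forall v : T, exists u : T, e v u) & #|T| = 2 * alpha].

Definition local_max_stable (A : {set T}) : Prop :=
  stable A /\ #|A| = alpha_in (closed_nbhd A).

End Graphs.

From mathcomp Require Import all_boot all_order zify.
Set Implicit Arguments. Unset Strict Implicit. Unset Printing Implicit Defensive.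

(* By Hall's theorem, the inequality |A| <= |N(A)| for stable sets A of a
   well-covered graph without isolated vertices yields a perfect matching p
   when |V| = 2 alpha.  Very well-coveredness then forces every neighbour of x
   to be adjacent to every neighbour of p x.  If S is a local maximum stable
   set and v in N(S) had p v outside S, exchanging the neighbours of v in S for
   their partners and adding v would give a larger stable set inside N[S];
   hence p matches N(S) into S, so mu(G[N[S]]) = |N(S)| and
   alpha(G[N[S]]) + mu(G[N[S]]) = |S| + |N(S)| = |N[S]|. *)

Lemma cardsU_disjoint (T : finType) (A B : {set T}) :
  {in A, forall x, x \notin B} -> #|A :|: B| = #|A| + #|B|.
Proof.
move=> AnB; apply/eqP; rewrite (leq_card_setU A B).2 disjoint_subset.
by apply/subsetP => x /AnB.
Qed.

Section Hall.
Variable T : finType.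
Implicit Types (r : rel T) (A B C X : {set T}).

Definition rel_image r A := [set y | [exists x in A, r x y]].

Definition rel_into r C := [rel x y | r x y && (y \in C)].

Definition hall_condition r X :=
  forall A, A \subset X -> #|A| <= #|rel_image r A|.

Definition has_sdr r X :=
  exists f : T -> T, {in X &, injective f} /\ {in X, forall x, r x (f x)}.

Lemma rel_imageP r A y :
  reflect (exists2 x, x \in A & r x y) (y \in rel_image r A).
Proof.
rewrite inE; apply: (iffP existsP) => [[x /andP[xA rxy]] | [x xA rxy]].
  by exists x.
by exists x; rewrite xA.
Qed.

Lemma rel_imageS r A B : A \subset B -> rel_image r A \subset rel_image r B.
Proof.
move=> sAB; apply/subsetP => y /rel_imageP[x xA rxy].
by apply/rel_imageP; exists x; rewrite ?(subsetP sAB).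
Qed.

Lemma rel_imageU r A B : rel_image r (A :|: B) = rel_image r A :|: rel_image r B.
Proof.
apply/setP => y; rewrite in_setU; apply/rel_imageP/orP => [[x] | ].
  by rewrite inE => /orP[] xA rxy; [left | right]; apply/rel_imageP; exists x.
by case=> /rel_imageP[x xA rxy]; exists x; rewrite // inE xA ?orbT.
Qed.

Lemma rel_image_into r C A : rel_image (rel_into r C) A = rel_image r A :&: C.
Proof.
apply/setP => y; rewrite in_setI; apply/rel_imageP/andP.
  by case=> x xA /andP[rxy yC]; split=> //; apply/rel_imageP; exists x.
by case=> /rel_imageP[x xA rxy] yC; exists x; rewrite //= rxy.
Qed.

Lemma has_sdrU r A B C :
  has_sdr (rel_into r C) A -> has_sdr (rel_into r (~: C)) B ->
  has_sdr r (A :|: B).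
Proof.
move=> [f [f_inj rf]] [g [g_inj rg]].
have fC : {in A, forall x, f x \in C} by move=> x /rf /andP[].
have gC : {in B, forall x, g x \notin C} by move=> x /rg /andP[_]; rewrite inE.
have inB x : x \in A :|: B -> x \notin A -> x \in B.
  by rewrite inE => /orP[-> | //].
exists (fun x => if x \in A then f x else g x); split => [x y xAB yAB | x xAB].
  case: ifP => xA; case: ifP => yA fxy.
  - exact: f_inj.
  - by have := gC y (inB y yAB (negbT yA)); rewrite -fxy fC.
  - by have := gC x (inB x xAB (negbT xA)); rewrite fxy fC.
  - exact: g_inj (inB x xAB (negbT xA)) (inB y yAB (negbT yA)) fxy.
case: ifP => xA; first by case/andP: (rf x xA).
by case/andP: (rg x (inB x xAB (negbT xA))).
Qed.

Lemma hall_condition_tight r X A :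
  hall_condition r X -> A \subset X -> #|rel_image r A| = #|A| ->
  hall_condition (rel_into r (~: rel_image r A)) (X :\: A).
Proof.
move=> hallX sAX tightA B sB.
have AnB : {in A, forall x, x \notin B}.
  by move=> x xA; apply/negP => /(subsetP sB); rewrite inE xA.
have := hallX (A :|: B).
rewrite subUset sAX (subset_trans sB (subsetDl _ _)) => /(_ isT).
rewrite cardsU_disjoint // rel_imageU cardsU tightA.
by rewrite rel_image_into -setDE cardsD (setIC (rel_image r B)); lia.
Qed.

Lemma hall_condition_slack r X x y :
  hall_condition r X -> x \in X ->
  (forall A, A \proper X -> A != set0 -> #|A| < #|rel_image r A|) ->
  hall_condition (rel_into r (~: [set y])) (X :\ x).
Proof.
move=> hallX xX slackX B sB.
have [-> | [b bB]] := set_0Vmem B; first by rewrite cards0.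
have nzB : B != set0 by apply/set0Pn; exists b.
have := slackX B (sub_proper_trans sB (properD1 xX)) nzB.
rewrite rel_image_into -setDE (cardsD1 y (rel_image r B)).
by case: (y \in _) => /=; lia.
Qed.

Theorem hall r X : hall_condition r X -> has_sdr r X.
Proof.
have [n] := ubnP #|X|; elim: n X r => // n IH X r /ltnSE leXn hallX.
have [-> | [x xX]] := set_0Vmem X.
  by exists id; split => [u v _ _ // | u]; rewrite in_set0.
have [/existsP[A /and3P[pAX nzA /eqP tightA]] | noTight] :=
  boolP [exists A : {set T}, [&& A \proper X, A != set0 & #|rel_image r A| == #|A|]].
  have sAX := proper_sub pAX.
  rewrite -(setID X A) (setIidPr sAX); apply: (has_sdrU (C := rel_image r A)).
    apply: IH (leq_trans (proper_card pAX) leXn) _ => B sBA.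
    rewrite rel_image_into (setIidPl (rel_imageS r sBA)).
    exact: hallX (subset_trans sBA sAX).
  apply: IH (hall_condition_tight hallX sAX tightA).
  by rewrite cardsDS //; move: leXn (proper_card pAX); rewrite -card_gt0 in nzA; lia.
have [y /rel_imageP[_ /set1P-> rxy]] : exists y, y \in rel_image r [set x].
  by apply/set0Pn; rewrite -card_gt0 -(cards1 x); apply: hallX; rewrite sub1set.
rewrite -(setD1K xX); apply: (has_sdrU (C := [set y])).
  exists (fun=> y); split => [u v /set1P-> /set1P-> // | u /set1P->].
  by rewrite /= rxy set11.
apply: IH (hall_condition_slack y hallX xX _).
  by move: leXn; rewrite (cardsD1 x X) xX; lia.
move=> A pAX nzA; rewrite ltn_neqAle hallX ?proper_sub // andbT eq_sym.
by move: noTight; rewrite negb_exists => /forallP/(_ A); rewrite pAX nzA.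
Qed.

End Hall.

Lemma involution_extension (T : finType) (I : {set T}) (f : T -> T) :
  {in I &, injective f} -> {in I, forall x, f x \notin I} -> #|~: I| <= #|I| ->
  exists p : T -> T,
    [/\ involutive p, {in I, forall x, p x = f x} & {in ~: I, forall y, p y \in I}].
Proof.
move=> f_inj fI cardI.
have fIC : f @: I = ~: I.
  apply/eqP; rewrite eqEcard card_in_imset // cardI andbT.
  by apply/subsetP => _ /imsetP[x xI ->]; rewrite inE fI.
pose g y := odflt y [pick x in I | f x == y].
have gK : {in ~: I, forall y, g y \in I /\ f (g y) = y}.
  move=> y; rewrite -fIC => /imsetP[x xI ->]; rewrite /g.
  by case: pickP => [x' /andP[x'I /eqP] | /(_ x)] //; rewrite xI eqxx.
have fxIC x : x \in I -> f x \in ~: I by rewrite inE => /fI.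
exists (fun x => if x \in I then f x else g x); split => [x | x /= -> // | y /=].
  have [xI | xNI] := boolP (x \in I).
    have [gI fg] := gK _ (fxIC x xI).
    by rewrite (negbTE (fI x xI)); apply: f_inj gI xI fg.
  have [gI fg] : g x \in I /\ f (g x) = x by apply: gK; rewrite inE.
  by rewrite gI.
move=> yC; have [gI _] := gK y yC.
by move: yC; rewrite inE => /negbTE->.
Qed.

Section Graph.
Variables (T : finType) (e : rel T).
Hypotheses (e_sym : symmetric e) (e_irr : irreflexive e).
Implicit Types (A B J S X : {set T}) (M : {set T * T}).

Definition open_nbhd A := [set v | [exists u in A, e v u]].

Lemma closed_nbhdE A : closed_nbhd e A = A :|: open_nbhd A.
Proof. by []. Qed.

Lemma open_nbhdP A v : reflect (exists2 u, u \in A & e v u) (v \in open_nbhd A).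
Proof. exact: (rel_imageP (fun u w => e w u)). Qed.

Lemma stableP A : reflect {in A &, forall x y, ~~ e x y} (stable e A).
Proof.
apply: (iffP forall_inP) => [stA x y xA yA | stA x xA].
  by move/forall_inP/(_ y yA): (stA x xA).
by apply/forall_inP => y; apply: stA.
Qed.

Lemma stableS A B : A \subset B -> stable e B -> stable e A.
Proof.
move=> sAB /stableP stB; apply/stableP => x y /(subsetP sAB) xB /(subsetP sAB).
exact: stB.
Qed.

Lemma stable1 x : stable e [set x].
Proof. by apply/stableP => u v /set1P-> /set1P->; rewrite e_irr. Qed.

Lemma stableU A B : stable e A -> stable e B ->
  {in A & B, forall x y, ~~ e x y} -> stable e (A :|: B).
Proof.
move=> /stableP stA /stableP stB stAB; apply/stableP => x y.
rewrite !inE => /orP[xA | xB] /orP[yA | yB]; first exact: stA.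
- exact: stAB.
- by rewrite e_sym; apply: stAB.
- exact: stB.
Qed.

Lemma stable_notin_nbhd A x : stable e A -> x \in A -> x \notin open_nbhd A.
Proof.
move=> /stableP stA xA; apply/negP => /open_nbhdP[u uA exu].
by have := stA x u xA uA; rewrite exu.
Qed.

Lemma leq_alpha_in X A : A \subset X -> stable e A -> #|A| <= alpha_in e X.
Proof.
move=> sAX stA.
by apply: (@leq_bigmax_cond _ (fun S => (S \subset X) && stable e S)); rewrite sAX.
Qed.

Lemma leq_alpha A : stable e A -> #|A| <= alpha e.
Proof. exact: leq_alpha_in (subsetT A). Qed.

Lemma card_stable_le_trace J A : stable e J -> #|J| = alpha e -> stable e A ->
  #|A| <= #|J :&: A| + #|J :&: open_nbhd A|.
Proof.
move=> stJ cJ stA.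
pose R := J :\: (A :|: open_nbhd A).
have stAR : stable e (A :|: R).
  apply: stableU stA (stableS (subsetDl _ _) stJ) _ => x z xA.
  rewrite in_setD in_setU negb_or => /andP[/andP[_ zN] _]; apply: contra zN => exz.
  by apply/open_nbhdP; exists x; rewrite // e_sym.
have := leq_alpha stAR; rewrite -cJ -(cardsID (A :|: open_nbhd A) J) setIUr.
rewrite cardsU_disjoint => [|x xA]; last by rewrite !inE xA.
rewrite cardsU_disjoint -/R => [|x /setIP[_ xA]]; first lia.
by rewrite inE negb_and stable_notin_nbhd ?orbT.
Qed.

Section WellCovered.
Hypothesis wc : well_covered e.

Lemma well_covered_extend A :
  stable e A -> exists2 J : {set T}, A \subset J & stable e J /\ #|J| = alpha e.
Proof.
move=> stA; have [J maxJ sAJ] := maxset_exists stA.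
by exists J => //; split; [case/maxsetP: maxJ | exact: wc].
Qed.

Hypothesis no_isolated : forall v, exists u, e v u.

(* Witness: for a maximum stable set J through a neighbour of A, drop from A
   the neighbours of J :&: N(A); the trace bound pays for the lost vertices. *)
Lemma stable_shrink A : stable e A -> A != set0 ->
  exists2 A' : {set T}, A' \proper A &
    stable e A' /\ #|A| + #|open_nbhd A'| <= #|A'| + #|open_nbhd A|.
Proof.
move=> stA /set0Pn[a aA]; have [y eay] := no_isolated a.
have [J yJ [stJ cJ]] := well_covered_extend (stable1 y).
pose Z := J :&: open_nbhd A; pose A' := A :\: open_nbhd Z.
exists A'; last split.
- rewrite properE subsetDl; apply/subsetPn; exists a => //.
  rewrite inE negb_and negbK aA orbF; apply/open_nbhdP; exists y => //.
  rewrite inE (subsetP yJ) ?set11 //; apply/open_nbhdP; exists a; by rewrite // e_sym.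
- exact: stableS (subsetDl _ _) stA.
have sNA' : open_nbhd A' \subset open_nbhd A :\: Z.
  apply/subsetP => w /open_nbhdP[u /setDP[uA uNZ] ewu].
  rewrite in_setD; apply/andP; split.
    apply: contra uNZ => wZ; apply/open_nbhdP; exists w; by rewrite // e_sym.
  by apply/open_nbhdP; exists u.
have sJA : J :&: A \subset A'.
  apply/subsetP => j /setIP[jJ jA]; rewrite inE jA andbT.
  apply/open_nbhdP => -[z /setIP[zJ _] ejz].
  by move/stableP: stJ => /(_ j z jJ zJ); rewrite ejz.
have := card_stable_le_trace stJ cJ stA.
have := subset_leq_card sNA'; have := subset_leq_card sJA.
rewrite cardsDS ?subsetIr //; have := subset_leq_card (subsetIr J (open_nbhd A)).
rewrite -/Z; lia.
Qed.

Lemma card_stable_le_nbhd A : stable e A -> #|A| <= #|open_nbhd A|.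
Proof.
have [n] := ubnP #|A|; elim: n A => // n IH A /ltnSE leAn stA.
have [-> | nzA] := eqVneq A set0; first by rewrite cards0.
have [A' pA'A [stA' leA']] := stable_shrink stA nzA.
by have := IH A' (leq_trans (proper_card pA'A) leAn) stA'; lia.
Qed.

End WellCovered.

Lemma very_well_covered_perfect_matching : very_well_covered e ->
  exists p : T -> T, (forall x, e x (p x)) /\ involutive p.
Proof.
case=> wc no_isolated cardT.
have st0 : stable e set0 by apply/stableP => x; rewrite in_set0.
have [I _ [stI cI]] := well_covered_extend wc st0.
have [f [f_inj efx]] : has_sdr (fun x y => e y x) I.
  apply: hall => A sAI.
  exact: card_stable_le_nbhd wc no_isolated _ (stableS sAI stI).
have fI : {in I, forall x, f x \notin I}.
  move=> x xI; apply/negP => fxI.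
  by move/stableP: stI => /(_ _ _ fxI xI); rewrite efx.
have [|p [pK pf pI]] := involution_extension f_inj fI.
  by have := cardsC I; rewrite cardT cI; lia.
exists p; split => // x; have [xI | xNI] := boolP (x \in I).
  by rewrite pf // e_sym efx.
have pxI : p x \in I by apply: pI; rewrite inE.
by have := efx _ pxI; rewrite /= -pf // pK.
Qed.

Lemma matching_inP X M : reflect
  ({in M, forall q, [&& e q.1 q.2, q.1 \in X & q.2 \in X]} /\
   {in M &, forall q q', q != q' ->
      [&& q.1 != q'.1, q.1 != q'.2, q.2 != q'.1 & q.2 != q'.2]})
  (matching_in e X M).
Proof.
apply: (iffP andP) => [[/forall_inP edges /forall_inP disj] | [edges disj]].
  by split=> // q q' qM q'M; move/forall_inP/(_ q' q'M)/implyP: (disj q qM).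
split; apply/forall_inP => // q qM.
by apply/forall_inP => q' q'M; apply/implyP; apply: disj.
Qed.

Lemma leq_mu_in X M : matching_in e X M -> #|M| <= mu_in e X.
Proof. exact: (@leq_bigmax_cond _ (matching_in e X) (fun M => #|M|)). Qed.

Lemma leq_mu_in_inj X B (f : T -> T) :
  {in B &, injective f} -> {in B, forall x, f x \notin B} ->
  {in B, forall x, e x (f x)} -> B \subset X -> f @: B \subset X ->
  #|B| <= mu_in e X.
Proof.
move=> f_inj fB ef sBX sfBX.
have <- : #|[set (x, f x) | x in B]| = #|B| by apply: card_imset => x y [].
apply: leq_mu_in; apply/matching_inP; split.
  move=> _ /imsetP[x xB ->] /=.
  by rewrite ef // (subsetP sBX) // (subsetP sfBX) ?imset_f.
move=> _ _ /imsetP[x xB ->] /imsetP[y yB ->] /= ne.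
have xy : x != y by apply: contraNneq ne => ->.
rewrite xy (inj_in_eq f_inj) // xy andbT /=.
apply/andP; split.
  by apply: contraNneq (fB y yB) => <-.
by apply: contraNneq (fB x xB) => ->.
Qed.

Lemma mu_in_closed_nbhd_le S :
  stable e S -> mu_in e (closed_nbhd e S) <= #|open_nbhd S|.
Proof.
move=> stS; apply/bigmax_leqP => M /matching_inP[edges disj].
pose g (q : T * T) := if q.1 \in S then q.2 else q.1.
have gN : {in M, forall q, g q \in open_nbhd S}.
  move=> q /edges /and3P[eq12]; rewrite /g !closed_nbhdE !in_setU.
  case: ifP => [q1S _ /orP[q2S | //] | _ /orP[] //].
  by move/stableP: stS => /(_ _ _ q1S q2S); rewrite eq12.
have g_inj : {in M &, injective g}.
  move=> q q' qM q'M; apply: contra_eq => /(disj q q' qM q'M) /and4P[].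
  by rewrite /g; do 2 case: ifP.
rewrite -(card_in_imset g_inj); apply: subset_leq_card.
by apply/subsetP => _ /imsetP[q qM ->]; apply: gN.
Qed.

Section PerfectMatching.
Variable p : T -> T.
Hypotheses (ep : forall x, e x (p x)) (pK : involutive p).

Lemma partner_notin_stable J x : stable e J -> x \in J -> p x \notin J.
Proof.
move=> /stableP stJ xJ; apply/negP => pxJ.
by have := stJ x (p x) xJ pxJ; rewrite ep.
Qed.

Lemma card_stable_partners J : stable e J -> #|J :|: p @: J| = #|J| + #|J|.
Proof.
move=> stJ; rewrite cardsU_disjoint ?card_imset //; first exact: inv_inj.
move=> x xJ; apply/imsetP => -[y yJ xy].
by move: xJ; rewrite xy; apply/negP; apply: partner_notin_stable.
Qed.

Lemma notin_stable_partners J x : x \notin J -> p x \notin J -> x \notin J :|: p @: J.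
Proof.
move=> xJ pxJ; rewrite in_setU negb_or xJ /=.
by apply: contra pxJ => /imsetP[j jJ ->]; rewrite pK.
Qed.

Hypotheses (wc : well_covered e) (cardT : #|T| = 2 * alpha e).

(* Otherwise a maximum stable set J through c and d misses x and p x, and
   J, p(J), {x, p x} would give 2 alpha + 2 > |V| distinct vertices. *)
Lemma partner_nbhds_adjacent x c d :
  e x c -> c != p x -> e (p x) d -> d != x -> e c d.
Proof.
move=> exc cpx epd dx; apply: contraT => necd.
have stcd : stable e [set c; d].
  apply: stableU (stable1 c) (stable1 d) _ => u v /set1P-> /set1P->; exact: necd.
have [J scdJ [stJ cardJ]] := well_covered_extend wc stcd.
have cJ : c \in J by rewrite (subsetP scdJ) ?set21.
have dJ : d \in J by rewrite (subsetP scdJ) ?set22.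
have xJ : x \notin J.
  by apply/negP => xJ; move/stableP: stJ => /(_ x c xJ cJ); rewrite exc.
have pxJ : p x \notin J.
  by apply/negP => pxJ; move/stableP: stJ => /(_ (p x) d pxJ dJ); rewrite epd.
have xpx : x != p x by apply: contraTneq (ep x) => <-; rewrite e_irr.
have := max_card ([set x; p x] :|: (J :|: p @: J)).
rewrite cardsU_disjoint ?(card_stable_partners stJ) ?cards2 ?xpx.
  by rewrite cardJ cardT; lia.
move=> z /set2P[]->; first exact: notin_stable_partners.
by apply: notin_stable_partners; rewrite ?pK.
Qed.

Section Exchange.
Variables (S : {set T}) (v : T).
Hypotheses (stS : stable e S) (vN : v \in open_nbhd S) (pvS : p v \notin S).

Let Sv := S :&: [set u | e v u].
Let Sn := S :\: [set u | e v u].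

Let vS : v \notin S.
Proof. by apply: contraL vN; apply: stable_notin_nbhd. Qed.

Let partner_ne_v t : t \in S -> v != p t.
Proof. by move=> tS; apply: contraNneq pvS => ->; rewrite pK. Qed.

Lemma exchange_v_partner t : t \in Sv -> ~~ e v (p t).
Proof.
move=> /setIP[tS]; rewrite inE => evt; apply/negP => evpt.
have ne_vt : v != t by apply: contraNneq vS => ->.
suff : e v v by rewrite e_irr.
by apply: (partner_nbhds_adjacent _ (partner_ne_v tS)); rewrite // e_sym.
Qed.

Lemma exchange_partner_rest t u : t \in Sv -> u \in Sn -> ~~ e (p t) u.
Proof.
move=> /setIP[tS]; rewrite inE => evt /setDP[uS]; rewrite inE => nevu.
have ne_ut : u != t by apply: contraNneq nevu => ->.
apply: contra nevu => eptu.
by apply: (partner_nbhds_adjacent _ (partner_ne_v tS)); rewrite // e_sym.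
Qed.

Lemma exchange_partners t1 t2 : t1 \in Sv -> t2 \in Sv -> ~~ e (p t1) (p t2).
Proof.
move=> t1Sv t2Sv; apply: contra (exchange_v_partner t2Sv) => ep12.
have /setIP[t1S] := t1Sv; rewrite inE => evt1.
have /setIP[t2S _] := t2Sv.
have ne_t1 : p t2 != t1 by apply: contraNneq (partner_notin_stable stS t2S) => ->.
by apply: (partner_nbhds_adjacent _ (partner_ne_v t1S)); rewrite // e_sym.
Qed.

Let exchange := (v |: Sn) :|: p @: Sv.

Lemma exchange_stable : stable e exchange.
Proof.
apply: stableU.
- apply: stableU (stable1 v) (stableS (subsetDl _ _) stS) _.
  by move=> _ u /set1P-> /setDP[_]; rewrite inE.
- by apply/stableP => _ _ /imsetP[t1 t1Sv ->] /imsetP[t2 t2Sv ->]; apply: exchange_partners.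
move=> u _ + /imsetP[t tSv ->]; rewrite in_setU1 => /predU1P[-> | uSn].
  exact: exchange_v_partner.
by rewrite e_sym; apply: exchange_partner_rest.
Qed.

Lemma card_exchange : #|exchange| = #|S|.+1.
Proof.
rewrite cardsU_disjoint => [|u]; last first.
  rewrite in_setU1 => /predU1P[-> | /setDP[uS _]]; apply/negP => /imsetP[t /setIP[tS _] E].
    by move: pvS; rewrite E pK tS.
  by move: (partner_notin_stable stS tS); rewrite -E uS.
have vSn : v \notin Sn by apply: contra vS => /setDP[].
rewrite cardsU1 vSn (card_imset _ (inv_inj pK)) add1n.
by have := cardsID [set u | e v u] S; rewrite -/Sv -/Sn; lia.
Qed.

Lemma exchange_sub : exchange \subset closed_nbhd e S.
Proof.
rewrite closed_nbhdE !subUset sub1set in_setU vN orbT.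
rewrite (subset_trans (subsetDl _ _) (subsetUl _ _)) /=.
apply/subsetP => _ /imsetP[t /setIP[tS _] ->]; rewrite in_setU.
by apply/orP; right; apply/open_nbhdP; exists t; rewrite // e_sym.
Qed.

Lemma exchange_gt_local_max : #|S| < alpha_in e (closed_nbhd e S).
Proof. by rewrite -card_exchange; apply: leq_alpha_in exchange_sub exchange_stable. Qed.

End Exchange.

Lemma local_max_partner_in S :
  local_max_stable e S -> {in open_nbhd S, forall v, p v \in S}.
Proof.
case=> stS cS v vN; apply: contraT => pvS.
by have := exchange_gt_local_max stS vN pvS; rewrite -cS ltnn.
Qed.

End PerfectMatching.

End Graph.

Theorem theorem7 (T : finType) (e : rel T)
  (e_sym : symmetric e) (e_irr : irreflexive e)
  (hG : very_well_covered e) (S : {set T}) (hS : local_max_stable e S) :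
  KE_in e (closed_nbhd e S).
Proof.
have [p [ep pK]] := very_well_covered_perfect_matching e_sym e_irr hG.
have [wc _ cardT] := hG; have [stS cS] := hS.
have pS := local_max_partner_in e_sym e_irr ep pK wc cardT hS.
rewrite /KE_in -cS [in RHS]closed_nbhdE cardsU_disjoint => [|x]; last first.
  exact: stable_notin_nbhd.
congr (_ + _); apply/eqP; rewrite eqn_leq mu_in_closed_nbhd_le //=.
apply: leq_mu_in_inj (in2W (inv_inj pK)) _ (in1W ep) (subsetUr _ _) _.
  by move=> x /pS pxS; apply: stable_notin_nbhd stS pxS.
by apply/subsetP => _ /imsetP[x /pS pxS ->]; rewrite in_setU pxS.
Qed.
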